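(* In the setting below, for orthogonal modified types $\boldsymbol\mu,\boldsymbol\nu,\boldsymbol\lambda$: $r_{\boldsymbol\mu,\boldsymbol\nu}^{\boldsymbol\lambda}=0$ whenever $|\boldsymbol\lambda|>|\boldsymbol\mu|+|\boldsymbol\nu|$, and whenever $|\boldsymbol\lambda|=|\boldsymbol\mu|+|\boldsymbol\nu|$ the polynomial $r_{\boldsymbol\mu,\boldsymbol\nu}^{\boldsymbol\lambda}$ is a constant belonging to $\mathbb{Z}$. (That is, the algebra over $\mathcal{R}_q[\tfrac12]$ with basis $K_{\boldsymbol\mu}$ and structure constants $r_{\boldsymbol\mu,\boldsymbol\nu}^{\boldsymbol\lambda}$ is filtered by $|\cdot|$ and its associated graded algebra has integer structure constants.)
   Context: $q$ odd prime power. $G_n(\mathbb{F}_q)$ is one of the families $O^+_{2n}$, $O^-_{2n}$, $O_{2n+1}$: the symmetry groups of the symmetric forms $\sum_{i=1}^n(x_{2i-1}y_{2i}+x_{2i}y_{2i-1})$ on $\mathbb{F}_q^{2n}$; $x_1y_1-\epsilon x_2y_2+\sum_{i=2}^n(x_{2i-1}y_{2i}+x_{2i}y_{2i-1})$ on $\mathbb{F}_q^{2n}$ ($\epsilon$ a fixed non-square); $x_1y_1+\sum_{i=1}^n(x_{2i}y_{2i+1}+x_{2i+1}y_{2i})$ on $\mathbb{F}_q^{2n+1}$, respectively, with $G_n\subset G_{n+1}$ via $g\mapsto\operatorname{diag}(g,\mathrm{Id}_2)$. Elements $g\in G_n$, $g'\in G_{n'}$ have the same orthogonal modified type if their images in some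 common $G_N$ are conjugate in $G_N$; a modified type is such a class, of size $|\boldsymbol\mu|=\operatorname{rank}(g-\mathrm{Id})$. $X_{\boldsymbol\mu,m}$ is the sum of elements of $G_m(\mathbb{F}_q)$ of modified type $\boldsymbol\mu$. $[m]_q=(q^m-1)/(q-1)$; $\mathcal{R}_q[\tfrac12]$ is the $\mathbb{Z}[\tfrac12,q,q^{-1}]$-span in $\mathbb{Q}[x]$ of $\binom{x}{k}_q=\frac{x(x-[1]_q)\cdots(x-[k-1]_q)}{q^{k(k-1)/2}[k]_q!}$. The polynomials $r_{\boldsymbol\mu,\boldsymbol\nu}^{\boldsymbol\lambda}\in\mathcal{R}_q[\tfrac12]$ are those with $X_{\boldsymbol\mu,m}X_{\boldsymbol\nu,m}=\sum_{\boldsymbol\lambda}r_{\boldsymbol\mu,\boldsymbol\nu}^{\boldsymbol\lambda}([m]_q)X_{\boldsymbol\lambda,m}$ for all $m\ge0$. *)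

From HB Require Import structures.
From mathcomp Require Import all_boot all_order all_algebra.
From Stdlib Require Import ClassicalDescription.
Set Implicit Arguments. Unset Strict Implicit. Unset Printing Implicit Defensive.
Import Order.TTheory GRing.Theory Num.Theory.
Local Open Scope ring_scope.

Inductive ofamily := OPlus | OMinus | OOdd.

Definition dG (fam : ofamily) (n : nat) : nat :=
  match fam with OOdd => (2 * n).+1 | _ => (2 * n)%N end.

Definition validn (fam : ofamily) (n : nat) : bool :=
  match fam with OMinus => (0 < n)%N | _ => true end.

Section Groups.
Variable F : finFieldType.

(* hyperbolic pairing on 0-based coordinates (0,1),(2,3),... *)
Definition hyp (i j : nat) : bool := (i != j) && (i./2 == j./2).

(* Gram matrix entry (0-based indices) of the defining symmetric form *)
Definition formE (fam : ofamily) (eps : F) (i j : nat) : F :=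
  match fam with
  | OPlus => (hyp i j)%:R
  | OMinus =>
      if (i == 0%N) && (j == 0%N) then 1
      else if (i == 1%N) && (j == 1%N) then - eps
      else if (2 <= i)%N && (2 <= j)%N then (hyp i j)%:R else 0
  | OOdd =>
      if (i == 0%N) && (j == 0%N) then 1
      else if (0 < i)%N && (0 < j)%N then (hyp i.-1 j.-1)%:R else 0
  end.

Definition formB (fam : ofamily) (eps : F) (n : nat) : 'M[F]_(dG fam n) :=
  \matrix_(i, j) formE fam eps i j.

Definition inG (fam : ofamily) (eps : F) (n : nat) (g : 'M[F]_(dG fam n)) : bool :=
  (g \in unitmx) && (g^T *m formB fam eps n *m g == formB fam eps n).


(* image of g in G_N:  g |-> diag(g, Id) *)
Definition embed (fam : ofamily) (n N : nat) (g : 'M[F]_(dG fam n)) :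
    'M[F]_(dG fam N) :=
  \matrix_(i, j)
    (match (insub (val i) : option 'I_(dG fam n)),
           (insub (val j) : option 'I_(dG fam n)) with
     | Some i', Some j' => g i' j'
     | _, _ => (i == j)%:R
     end).


(* an element of some G_n, used as a representative of a modified type *)
Record modrep (fam : ofamily) := MkRep { rn : nat; rg : 'M[F]_(dG fam rn) }.

Definition validRep fam eps (x : modrep fam) : Prop :=
  validn fam (rn x) /\ inG eps (rg x).

(* same orthogonal modified type: conjugate images in a common G_N *)
Definition sameType fam eps (x y : modrep fam) : Prop :=
  exists N : nat, [/\ validn fam N, (rn x <= N)%N, (rn y <= N)%N &
    exists h : 'M[F]_(dG fam N), inG eps h /\
      embed N (rg y) = invmx h *m embed N (rg x) *m h].

Definition msize fam (x : modrep fam) : nat := \rank (rg x - 1%:M).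

(* X_{mu,m} as an element of the group algebra Q[G_m], i.e. a function
   on matrices supported on G_m *)
Definition Xel fam eps (m : nat) (mu : modrep fam) (g : 'M[F]_(dG fam m)) : rat :=
  if excluded_middle_informative (inG eps g /\ sameType eps (MkRep g) mu)
  then 1 else 0.


Definition conv fam (m : nat) (f1 f2 : 'M[F]_(dG fam m) -> rat)
    (g : 'M[F]_(dG fam m)) : rat :=
  \sum_(a : 'M[F]_(dG fam m)) \sum_(b : 'M[F]_(dG fam m) | a *m b == g)
     f1 a * f2 b.


(* sum_lambda c_lambda X_{lambda,m}, c given as a function of types *)
Definition linX fam eps (m : nat) (c : modrep fam -> rat) (g : 'M[F]_(dG fam m))
  : rat := if inG eps g then c (MkRep g) else 0.


End Groups.

Arguments embed {F fam} n N g.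
Arguments inG {F fam} eps n g.
Arguments Xel {F fam} eps m mu g.
Arguments conv {F fam} m f1 f2 g.
Arguments linX {F fam} eps m c g.

Definition qint (q m : nat) : rat := ((q%:Q) ^+ m - 1) / (q%:Q - 1).

Definition qfact (q k : nat) : rat := \prod_(i < k) qint q i.+1.

Definition qbinom (q k : nat) : {poly rat} :=
  ((q%:Q) ^+ 'C(k, 2) * qfact q k)^-1 *: \prod_(i < k) ('X - (qint q i)%:P).

Definition inZhq (q : nat) (c : rat) : Prop :=
  exists (a : int) (i j : nat), c = a%:~R / (2%:Q ^+ i * (q%:Q) ^+ j).

Definition inRq (q : nat) (p : {poly rat}) : Prop :=
  exists (n : nat) (c : nat -> rat),
    (forall k, inZhq q (c k)) /\ p = \sum_(k < n) c k *: qbinom q k.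

From Pilot Require Import Defs.
From Stdlib Require Import ClassicalDescription.
From HB Require Import structures.
From mathcomp Require Import all_boot all_order all_algebra.
From mathcomp Require Import zify.
Set Implicit Arguments. Unset Strict Implicit. Unset Printing Implicit Defensive.
Import Order.TTheory GRing.Theory Num.Theory.
Local Open Scope ring_scope.

(* Let g represent lambda in G_n.  For m >= n, evaluating the structure
   equation at diag(g, Id) in G_m shows that r_lambda([m]_q) is the
   coefficient of diag(g, Id) in X_{mu,m} X_{nu,m}, i.e. the number of
   factorisations diag(g, Id) = a b with a of type mu and b of type nu.
   Since rank(ab - 1) <= rank(a - 1) + rank(b - 1), there are none when
   |lambda| > |mu| + |nu|.  When |lambda| = |mu| + |nu| the rank is additive,
   which forces a - 1 (hence also b - 1) to live in the block of g, so the
   count does not depend on m.  Either way r_lambda is constant on the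
   infinitely many points [m]_q, hence a constant natural number. *)

Section IsometricExtension.
Variables (F : fieldType) (d D : nat) (E : 'M[F]_(d, D)).

(* For [E] the coordinate inclusion ([pid_mx]) this is [diag(x, Id)]; in
   general [x] acts on the row space of [E] and the identity on its
   orthogonal complement. *)
Definition extmx (x : 'M[F]_d) : 'M[F]_D := E^T *m x *m E + (1%:M - E^T *m E).

Lemma trmx_extmx x : (extmx x)^T = extmx x^T.
Proof. by rewrite /extmx linearD linearB /= !trmx_mul !trmxK trmx1 mulmxA. Qed.

Lemma extmx1 : extmx 1%:M = 1%:M.
Proof. by rewrite /extmx mulmx1 addrC subrK. Qed.

Lemma rank_add_sub1 n (a b : 'M[F]_n) :
  (\rank (a - 1%:M)%R + \rank (b - 1%:M)%R <= \rank (a *m b - 1%:M)%R)%N ->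
  (a - 1%:M <= a *m b - 1%:M)%MS && (b - 1%:M <= a *m b - 1%:M)%MS.
Proof.
move=> hr; set G := a *m b - 1%:M.
have sG : (G <= (a - 1%:M) + (b - 1%:M))%MS.
  have -> : G = (a - 1%:M) + a *m (b - 1%:M).
    by rewrite mulmxBr mulmx1 addrC addrA subrK.
  by apply: addmx_sub_adds => //; apply: submxMl.
have le_adds := leq_of_leqif (mxrank_adds_leqif (a - 1%:M) (b - 1%:M)).
rewrite -addsmx_sub -(geq_leqif (mxrank_leqif_sup sG)).
exact: leq_trans le_adds hr.
Qed.

Hypothesis EEt : E *m E^T = 1%:M.

Lemma mulmx_extmx x : E *m extmx x = x *m E.
Proof. by rewrite /extmx mulmxDr mulmxBr !mulmxA EEt mulmx1 !mul1mx subrr addr0. Qed.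

Lemma extmx_mul_tr x : extmx x *m E^T = E^T *m x.
Proof. by rewrite /extmx mulmxDl mulmxBl -!mulmxA EEt !mulmx1 mul1mx subrr addr0. Qed.

Lemma extmxK x : E *m extmx x *m E^T = x.
Proof. by rewrite mulmx_extmx -mulmxA EEt mulmx1. Qed.

Lemma extmx_inj : injective extmx.
Proof. by move=> x y exy; rewrite -(extmxK x) exy extmxK. Qed.

Lemma extmxM x y : extmx x *m extmx y = extmx (x *m y).
Proof.
rewrite [extmx y]/extmx mulmxDr mulmxBr mulmx1 !mulmxA !extmx_mul_tr.
by rewrite /extmx [E^T *m x *m E + _]addrC addrK !mulmxA.
Qed.

Lemma extmx_sub1 x : extmx x - 1%:M = E^T *m (x - 1%:M) *m E.
Proof. by rewrite /extmx mulmxBr mulmxBl mulmx1 addrAC -addrA addKr. Qed.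

Lemma row_free_isometry : row_free E.
Proof.
by rewrite /row_free eqn_leq rank_leq_row -{1}(mxrank1 F d) -EEt mxrankM_maxl.
Qed.

Lemma mxrank_extmx_sub1 x : \rank (extmx x - 1%:M) = \rank (x - 1%:M).
Proof.
rewrite extmx_sub1 (mxrankMfree _ row_free_isometry) -mxrank_tr trmx_mul trmxK.
by rewrite (mxrankMfree _ row_free_isometry) mxrank_tr.
Qed.

Lemma unitmx_extmx x : (extmx x \in unitmx) = (x \in unitmx).
Proof.
apply/idP/idP => [ux | ux].
  have : x *m (E *m invmx (extmx x) *m E^T) = 1%:M.
    by rewrite !mulmxA -mulmx_extmx -(mulmxA E) mulmxV // mulmx1 EEt.
  by case/mulmx1_unit.
have := extmxM x (invmx x); rewrite mulmxV // extmx1.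
by case/mulmx1_unit.
Qed.

Lemma invmx_extmx x : x \in unitmx -> invmx (extmx x) = extmx (invmx x).
Proof.
move=> ux; have ue : extmx x \in unitmx by rewrite unitmx_extmx.
by rewrite -[invmx _]mulmx1 -extmx1 -(mulmxV ux) -extmxM mulmxA mulVmx // mul1mx.
Qed.

Lemma submx_mulmx_trE n (A : 'M[F]_(n, D)) : (A <= E)%MS -> A *m (E^T *m E) = A.
Proof.
move=> sAE; rewrite -{1}(mulmxKpV sAE) mulmxA -(mulmxA _ E) EEt mulmx1.
exact: mulmxKpV.
Qed.

(* Rank additivity puts the rows of [a - 1] in the row space of [ab - 1]
   and, applied to [b^T a^T], its columns in the column space; both lie in
   the block spanned by [E]. *)
Lemma extmx_factor (a b : 'M[F]_D) g :
  a *m b = extmx g ->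
  (\rank (a - 1%:M)%R + \rank (b - 1%:M)%R <= \rank (a *m b - 1%:M)%R)%N ->
  a = extmx (E *m a *m E^T).
Proof.
move=> hab hr; set P := E^T *m E.
have sGE : (a *m b - 1%:M <= E)%MS by rewrite hab extmx_sub1 submxMl.
have sGtE : ((a *m b - 1%:M)^T <= E)%MS.
  by rewrite hab extmx_sub1 !trmx_mul trmxK mulmxA submxMl.
have trG : (a *m b - 1%:M)^T = b^T *m a^T - 1%:M.
  by rewrite linearB /= trmx_mul trmx1.
have /andP[sA _] := rank_add_sub1 hr.
have /andP[_ sAt] : (b^T - 1%:M <= b^T *m a^T - 1%:M)%MS &&
                    (a^T - 1%:M <= b^T *m a^T - 1%:M)%MS.
  apply: rank_add_sub1; rewrite -trG -trmx1 -!linearB /= !mxrank_tr trmx1.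
  by rewrite addnC.
have sAtE : (a^T - 1%:M <= E)%MS by apply: submx_trans sAt _; rewrite -trG.
have AP : (a - 1%:M) *m P = a - 1%:M.
  exact/submx_mulmx_trE/(submx_trans sA sGE).
have PA : P *m (a - 1%:M) = a - 1%:M.
  apply: trmx_inj; rewrite trmx_mul /P trmx_mul trmxK linearB /= trmx1.
  exact: submx_mulmx_trE.
have PP : P *m P = P by rewrite /P mulmxA -(mulmxA _ E) EEt mulmx1.
rewrite /extmx -/P.
have -> : E^T *m (E *m a *m E^T) *m E = P *m (a - 1%:M) *m P + P *m P.
  by rewrite mulmxBr mulmx1 mulmxBl addrNK !mulmxA.
by rewrite PA AP PP addrACA subrK subrr addr0.
Qed.

Variables (Bd : 'M[F]_d) (BD : 'M[F]_D).
Hypotheses (EB : E *m BD = Bd *m E) (BEt : BD *m E^T = E^T *m Bd).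

(* [BD] is the extension of [Bd] plus a remainder annihilated by [E] on both
   sides, hence fixed by every [extmx y] on both sides. *)
Lemma extmx_form x :
  ((extmx x)^T *m BD *m extmx x == BD) = (x^T *m Bd *m x == Bd).
Proof.
set Rm := BD - E^T *m Bd *m E.
have ERm : E *m Rm = 0 by rewrite mulmxBr !mulmxA EEt mul1mx EB subrr.
have RmEt : Rm *m E^T = 0 by rewrite mulmxBl -!mulmxA EEt mulmx1 BEt subrr.
have extRm y : extmx y *m Rm = Rm.
  by rewrite /extmx mulmxDl mulmxBl mul1mx -!mulmxA ERm !mulmx0 add0r subr0.
have Rmext y : Rm *m extmx y = Rm.
  by rewrite /extmx mulmxDr mulmxBr mulmx1 !mulmxA RmEt !mul0mx add0r subr0.
have splitBD : BD = E^T *m Bd *m E + Rm by rewrite addrC subrK.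
have -> : (extmx x)^T *m BD *m extmx x = E^T *m (x^T *m Bd *m x) *m E + Rm.
  rewrite {1}splitBD trmx_extmx mulmxDr mulmxDl extRm Rmext !mulmxA.
  by rewrite extmx_mul_tr -[_ *m Bd *m E *m extmx x]mulmxA mulmx_extmx !mulmxA.
apply/eqP/eqP => [hx | ->]; last by rewrite -splitBD.
have := congr1 (fun M => E *m M *m E^T) hx.
rewrite mulmxDr mulmxDl ERm mul0mx addr0 !mulmxA EEt mul1mx -mulmxA EEt mulmx1.
by move=> ->; rewrite EB -mulmxA EEt mulmx1.
Qed.

End IsometricExtension.

Lemma extmx_comp (F : fieldType) d1 d2 d3 (E1 : 'M[F]_(d1, d2)) (E2 : 'M[F]_(d2, d3)) x :
  extmx E2 (extmx E1 x) = extmx (E1 *m E2) x.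
Proof.
rewrite /extmx mulmxDr mulmxDl mulmxBr mulmxBl mulmx1 trmx_mul !mulmxA.
by rewrite -addrA; congr (_ + _); rewrite addrC addrA subrK.
Qed.

Lemma mxrank_conj_sub1 (F : fieldType) n (h X : 'M[F]_n) : h \in unitmx ->
  \rank (invmx h *m X *m h - 1%:M) = \rank (X - 1%:M).
Proof.
move=> uh; have -> : invmx h *m X *m h - 1%:M = invmx h *m (X - 1%:M) *m h.
  by rewrite mulmxBr mulmxBl mulmx1 mulVmx.
rewrite mxrankMfree ?row_free_unit // -mxrank_tr trmx_mul.
by rewrite mxrankMfree ?mxrank_tr // row_free_unit unitmx_tr unitmx_inv.
Qed.

Section CoordinateInclusion.
Variable F : fieldType.

Lemma mulmx_pid_mxE m d D (X : 'M[F]_(m, d)) i (j : 'I_D) :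
  (X *m pid_mx d) i j = oapp (X i) 0 (insub (val j) : option 'I_d).
Proof.
rewrite mxE; case: insubP => [j' _ ej | /negbTE jd].
  rewrite (bigD1 j') //= mxE -ej eqxx ltn_ord mulr1 big1 ?addr0 // => k kj.
  by rewrite mxE -ej (inj_eq val_inj) (negbTE kj) mulr0.
apply: big1 => k _; rewrite mxE; case: eqP => [kj | _]; last by rewrite mulr0.
by move: jd; rewrite /= -kj ltn_ord.
Qed.

Lemma pid_mx_mulmxE d D m (le : (d <= D)%N) (Y : 'M[F]_(D, m)) i j :
  (pid_mx d *m Y) i j = Y (widen_ord le i) j.
Proof.
rewrite mxE (bigD1 (widen_ord le i)) //= mxE eqxx ltn_ord mul1r big1 ?addr0 //.
by move=> k; rewrite mxE -(inj_eq val_inj) /= eq_sym => /negbTE->; rewrite mul0r.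
Qed.

Lemma tr_pid_mx_mulmxE d D m (X : 'M[F]_(d, m)) (i : 'I_D) j :
  ((pid_mx d : 'M_(d, D))^T *m X) i j = oapp (X^~ j) 0 (insub (val i) : option 'I_d).
Proof.
rewrite -[_ *m X]trmxK trmx_mul trmxK mxE mulmx_pid_mxE.
by case: insub => //= i'; rewrite mxE.
Qed.

Lemma pid_mx_mul_tr d D : (d <= D)%N -> (pid_mx d : 'M[F]_(d, D)) *m (pid_mx d)^T = 1%:M.
Proof. by move=> le; rewrite tr_pid_mx pid_mx_id // pid_mx_1. Qed.

End CoordinateInclusion.

Lemma hyp_sym i j : hyp i j = hyp j i.
Proof. by rewrite /hyp eq_sym [i./2 == _]eq_sym. Qed.

Lemma hyp_far i j n : (i < n.*2)%N -> (n.*2 <= j)%N -> hyp i j = false.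
Proof.
rewrite /hyp -ltn_half_double => lt_i lt_j.
suff : (i./2 < j./2)%N by rewrite ltn_neqAle => /andP[/negbTE->]; rewrite andbF.
by apply: leq_trans lt_i _; rewrite leqNgt ltn_half_double -leqNgt.
Qed.

Section Family.
Variables (F : finFieldType) (fam : ofamily) (eps : F).

Local Notation incl n N := (pid_mx (dG fam n) : 'M[F]_(dG fam n, dG fam N)).

Lemma leq_dG n N : (n <= N)%N -> (dG fam n <= dG fam N)%N.
Proof. by case: fam => /= h; lia. Qed.

Lemma validn_mono n N : validn fam n -> (n <= N)%N -> validn fam N.
Proof. by case: fam => //= h1 h2; apply: leq_trans h1 h2. Qed.

Lemma formE_sym i j : formE fam eps i j = formE fam eps j i.
Proof.
case: fam => /=; first by rewrite hyp_sym.
  case: (i == 0)%N; case: (j == 0)%N => //=; case: (i == 1)%N; case: (j == 1)%N => //=;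
  by rewrite andbC hyp_sym.
by case: (i == 0)%N; case: (j == 0)%N; rewrite //= andbC hyp_sym.
Qed.

Lemma formE_mixed n i j :
  (i < dG fam n)%N -> (dG fam n <= j)%N -> formE fam eps i j = 0.
Proof.
case: fam => /= lt_i le_j.
- by rewrite (@hyp_far i j n) //; lia.
- have -> : (j == 0)%N = false by apply/negbTE; lia.
  have -> : (j == 1)%N = false by apply/negbTE; lia.
  rewrite !andbF /=; case: (2 <= i)%N; case: (2 <= j)%N => //=.
  by rewrite (@hyp_far i j n) //; lia.
- have -> : (j == 0)%N = false by apply/negbTE; lia.
  rewrite !andbF /=; case hi: (0 < i)%N; case: (0 < j)%N => //=.
  by rewrite (@hyp_far i.-1 j.-1 n) //; lia.
Qed.

Lemma tr_formB n : (Defs.formB fam eps n)^T = Defs.formB fam eps n.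
Proof. by apply/matrixP => i j; rewrite !mxE formE_sym. Qed.

Lemma incl_formB n N : (n <= N)%N ->
  incl n N *m Defs.formB fam eps N = Defs.formB fam eps n *m incl n N.
Proof.
move=> le; apply/matrixP => i j.
rewrite (pid_mx_mulmxE (leq_dG le)) mulmx_pid_mxE !mxE.
case: insubP => [j' _ ej | /negbTE]; first by rewrite /= mxE ej.
by move=> ge_j; rewrite /= (formE_mixed (ltn_ord i)) // leqNgt ge_j.
Qed.

Lemma incl_mul_tr n N : (n <= N)%N -> incl n N *m (incl n N)^T = 1%:M.
Proof. by move/leq_dG; apply: pid_mx_mul_tr. Qed.

Lemma incl_comp n m N : (n <= m)%N -> incl n m *m incl m N = incl n N.
Proof. by move/leq_dG => le; rewrite mul_pid_mx (minn_idPl le) (minn_idPr le). Qed.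

Lemma embedE n N (x : 'M[F]_(dG fam n)) : embed n N x = extmx (incl n N) x.
Proof.
apply/matrixP => i j; rewrite [LHS]mxE [RHS]mxE mulmx_pid_mxE.
case: (@insubP _ _ 'I_(dG fam n) (val j)) => [j' _ _ | /negbTE ge_j] /=;
  rewrite ?tr_pid_mx_mulmxE tr_pid_mx mul_pid_mx !minnn !mxE;
  case: (@insubP _ _ 'I_(dG fam n) (val i)) => [i' lt_i _ | /negbTE ge_i] /=;
  rewrite ?[(i < _)%N]lt_i ?[(i < _)%N]ge_i ?andbT ?andbF ?subrr ?subr0 ?addr0 ?add0r //.
by case: eqP => // eij; move: ge_j; rewrite -eij [(i < _)%N]lt_i.
Qed.

Lemma embed_trans n m N (x : 'M[F]_(dG fam n)) : (n <= m)%N -> (m <= N)%N ->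
  embed m N (embed n m x) = embed n N x.
Proof. by move=> le_nm le_mN; rewrite !embedE extmx_comp incl_comp. Qed.

Section Level.
Variables (n N : nat).
Hypothesis le_nN : (n <= N)%N.

Let inclK := incl_mul_tr le_nN.

Lemma embed_inj : injective (@embed F fam n N).
Proof. by move=> x y; rewrite !embedE => /(extmx_inj inclK). Qed.

Lemma embedM (x y : 'M[F]_(dG fam n)) : embed n N x *m embed n N y = embed n N (x *m y).
Proof. by rewrite !embedE (extmxM inclK). Qed.

Lemma unitmx_embed (x : 'M[F]_(dG fam n)) : (embed n N x \in unitmx) = (x \in unitmx).
Proof. by rewrite embedE (unitmx_extmx inclK). Qed.

Lemma invmx_embed (x : 'M[F]_(dG fam n)) :
  x \in unitmx -> invmx (embed n N x) = embed n N (invmx x).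
Proof. by move=> ux; rewrite !embedE (invmx_extmx inclK). Qed.

Lemma mxrank_embed_sub1 (x : 'M[F]_(dG fam n)) :
  \rank (embed n N x - 1%:M) = \rank (x - 1%:M).
Proof. by rewrite embedE (mxrank_extmx_sub1 inclK). Qed.

Lemma inG_embed (x : 'M[F]_(dG fam n)) : inG eps N (embed n N x) = inG eps n x.
Proof.
have BEt : Defs.formB fam eps N *m (incl n N)^T = (incl n N)^T *m Defs.formB fam eps n.
  by apply: trmx_inj; rewrite !trmx_mul !trmxK !tr_formB incl_formB.
by rewrite /inG unitmx_embed embedE (extmx_form inclK (incl_formB le_nN) BEt).
Qed.

End Level.

Lemma inG1 n : inG eps n (1%:M : 'M[F]_(dG fam n)).
Proof. by rewrite /inG unitmx1 trmx1 mul1mx mulmx1 eqxx. Qed.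

Lemma sameType_lift nx ny N N' (x : 'M[F]_(dG fam nx)) (y : 'M[F]_(dG fam ny))
    (h : 'M[F]_(dG fam N)) :
  (nx <= N)%N -> (ny <= N)%N -> (N <= N')%N -> inG eps N h ->
  embed ny N y = invmx h *m embed nx N x *m h ->
  exists2 h' : 'M[F]_(dG fam N'), inG eps N' h' &
    embed ny N' y = invmx h' *m embed nx N' x *m h'.
Proof.
move=> le_x le_y le_N hG e; exists (embed N N' h); first by rewrite inG_embed.
have uh : h \in unitmx by case/andP: hG.
by rewrite -(embed_trans _ le_y le_N) e -!embedM // invmx_embed // embed_trans.
Qed.

Lemma msize_sameType (x y : modrep F fam) : sameType eps x y -> msize x = msize y.
Proof.
case=> N [_ le_x le_y [h [hG e]]]; have uh : h \in unitmx by case/andP: hG.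
by rewrite /msize -(mxrank_embed_sub1 le_x) -(mxrank_embed_sub1 le_y) e
  mxrank_conj_sub1.
Qed.

Lemma sameType_embed n m (g : 'M[F]_(dG fam n)) : validn fam m -> (n <= m)%N ->
  sameType eps (MkRep g) (MkRep (embed n m g)).
Proof.
move=> vm le; exists m; split => //; exists 1%:M; split; first exact: inG1.
by rewrite invmx1 mul1mx mulmx1 embed_trans.
Qed.

Lemma Xel_embed n m (mu : modrep F fam) (g : 'M[F]_(dG fam n)) : (n <= m)%N ->
  Xel eps m mu (embed n m g) = Xel eps n mu g.
Proof.
move=> le; rewrite /Xel.
case: excluded_middle_informative => [[hGm hm] | hm];
case: excluded_middle_informative => [[hGn hn] | hn] //; [case: hn | case: hm].
- split; first by rewrite -(inG_embed le).
  case: hm => N [vN /= le_mN le_N [h [hG e]]].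
  exists N; split => //=; first exact: leq_trans le le_mN.
  by exists h; split => //; rewrite -(embed_trans _ le le_mN).
- split; first by rewrite inG_embed.
  case: hn => N [vN /= le_nN le_N [h [hG e]]].
  have [h' hG' e'] := sameType_lift le_nN le_N (leq_maxl N m) hG e.
  exists (maxn N m); split => /=; rewrite ?leq_maxr //.
  + exact: validn_mono vN (leq_maxl N m).
  + exact: leq_trans le_N (leq_maxl N m).
  by exists h'; split => //; rewrite embed_trans // leq_maxr.
Qed.

End Family.

Lemma mxrank_mul_sub1 (F : fieldType) n (a b : 'M[F]_n) :
  (\rank (a *m b - 1%:M)%R <= \rank (a - 1%:M)%R + \rank (b - 1%:M)%R)%N.
Proof.
have -> : a *m b - 1%:M = a *m (b - 1%:M) + (a - 1%:M).
  by rewrite mulmxBr mulmx1 addrA subrK.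
by apply: leq_trans (mxrank_add _ _) _; rewrite addnC leq_add2l mxrankM_maxr.
Qed.

Lemma sum_neq0_exists (V : nmodType) (I : finType) (f : I -> V) :
  \sum_i f i != 0 -> exists i, f i != 0.
Proof.
move=> nz; apply/existsP; apply: contraNT nz => /existsPn f0.
by apply/eqP/big1 => i _; apply/eqP/negPn/f0.
Qed.

Section Convolution.
Variables (F : finFieldType) (fam : ofamily) (eps : F).

Lemma Xel_nat m (mu : modrep F fam) g : Xel eps m mu g \is a Num.nat.
Proof. by rewrite /Xel; case: excluded_middle_informative. Qed.

Lemma Xel_neq0 m (mu : modrep F fam) g : Xel eps m mu g != 0 ->
  inG eps m g /\ \rank (g - 1%:M) = msize mu.
Proof.
rewrite /Xel; case: excluded_middle_informative => [[hg hmu] _ | _] //.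
by split => //; exact: msize_sameType hmu.
Qed.

Lemma conv_Xel_nat m (mu nu : modrep F fam) g :
  conv m (Xel eps m mu) (Xel eps m nu) g \is a Num.nat.
Proof. by apply: rpred_sum => a _; apply: rpred_sum => b _; rewrite rpredM ?Xel_nat. Qed.

Lemma conv_embed_eq0 n m (mu nu : modrep F fam) (g : 'M[F]_(dG fam n)) :
  (n <= m)%N -> (msize mu + msize nu < \rank (g - 1%:M)%R)%N ->
  conv m (Xel eps m mu) (Xel eps m nu) (embed n m g) = 0.
Proof.
move=> le hr; apply: big1 => a _; apply: big1 => b /eqP hab.
have [-> | Xa] := eqVneq (Xel eps m mu a) 0; first by rewrite mul0r.
have [-> | Xb] := eqVneq (Xel eps m nu b) 0; first by rewrite mulr0.
have [[_ ra] [_ rb]] := (Xel_neq0 Xa, Xel_neq0 Xb).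
have := mxrank_mul_sub1 a b; rewrite hab mxrank_embed_sub1 // ra rb.
by rewrite leqNgt hr.
Qed.

Lemma big_embed n m (le : (n <= m)%N) (f : 'M[F]_(dG fam m) -> rat) :
  (forall a, f a != 0 -> exists a0, a = embed n m a0) ->
  \sum_a f a = \sum_a0 f (embed n m a0).
Proof.
move=> supp_f; rewrite (bigID (mem [set embed n m a0 | a0 : 'M_(dG fam n)])) /=.
rewrite [X in _ + X]big1 ?addr0 => [|a /negP not_im]; last first.
  apply/eqP; apply: contraT => /supp_f [a0 ea].
  by case: not_im; rewrite ea imset_f.
by rewrite big_imset //= => x y _ _ /(embed_inj le).
Qed.

Lemma Xel_factor_embed n m (mu nu : modrep F fam) (a b : 'M[F]_(dG fam m))
    (g : 'M[F]_(dG fam n)) : (n <= m)%N ->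
  a *m b = embed n m g -> (msize mu + msize nu <= \rank (g - 1%:M)%R)%N ->
  Xel eps m mu a * Xel eps m nu b != 0 -> exists a0, a = embed n m a0.
Proof.
move=> le hab hr; rewrite mulf_eq0 negb_or => /andP[/Xel_neq0[_ ra] /Xel_neq0[_ rb]].
exists (pid_mx (dG fam n) *m a *m (pid_mx (dG fam n))^T); rewrite embedE.
apply: (extmx_factor (incl_mul_tr F fam le) (b := b) (g := g)).
  by rewrite hab embedE.
by rewrite ra rb hab mxrank_embed_sub1.
Qed.

Lemma conv_embed n m (mu nu : modrep F fam) (g : 'M[F]_(dG fam n)) :
  (n <= m)%N -> (msize mu + msize nu <= \rank (g - 1%:M)%R)%N ->
  conv m (Xel eps m mu) (Xel eps m nu) (embed n m g) =
  conv n (Xel eps n mu) (Xel eps n nu) g.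
Proof.
move=> le hr; rewrite /conv.
under eq_bigr => a _ do rewrite big_mkcond /=.
under [RHS]eq_bigr => a _ do rewrite big_mkcond /=.
rewrite (big_embed le) => [|a /sum_neq0_exists[b]]; last first.
  case: ifP => [/eqP hab | _]; last by rewrite eqxx.
  exact: Xel_factor_embed le hab hr.
apply: eq_bigr => a0 _; rewrite (big_embed le) => [|b].
  apply: eq_bigr => b0 _.
  by rewrite embedM // (inj_eq (embed_inj le)) !Xel_embed.
case: ifP => [/eqP hab nz|]; last by rewrite eqxx.
have Xa : Xel eps m mu (embed n m a0) != 0.
  by apply: contraNneq nz => ->; rewrite mul0r.
have [hG _] := Xel_neq0 Xa.
have ua0 : a0 \in unitmx by move: hG; rewrite inG_embed // => /andP[].
exists (invmx a0 *m g).
by rewrite -embedM // -invmx_embed // -hab mulKmx ?unitmx_embed.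
Qed.

End Convolution.

Lemma eq_polyC_of_inj_horner (R : idomainType) (p : {poly R}) (c : R) (f : nat -> R) :
  injective f -> (forall k, p.[f k] = c) -> p = c%:P.
Proof.
move=> inj_f pf; apply/eqP; rewrite -subr_eq0; apply: contraT => nz.
have := max_poly_roots nz (rs := map f (iota 0 (size (p - c%:P)))).
rewrite size_map size_iota ltnn (map_inj_uniq inj_f) iota_uniq; apply=> //.
by apply/allP => _ /mapP[k _ ->]; rewrite rootE hornerD hornerN hornerC pf subrr.
Qed.

Lemma qint_inj q : (1 < q)%N -> injective (qint q).
Proof.
move=> q_gt1 a b; have q1 : q%:Q - 1 != 0 by rewrite subr_eq0 pnatr_eq1 gtn_eqF.
rewrite /qint => /(congr1 ( *%R^~ (q%:Q - 1))); rewrite !divfK // => /addIr.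
by rewrite -!natrX => /eqP; rewrite eqr_nat => /eqP /expnI; apply.
Qed.

Theorem theorem8p22 (F : finFieldType) (fam : ofamily) (eps : F)
    (mu nu : modrep F fam) (r : modrep F fam -> {poly rat}) :
  odd #|F| ->
  (forall x : F, x * x != eps) ->
  validRep eps mu -> validRep eps nu ->
  (forall x y : modrep F fam, validRep eps x -> validRep eps y ->
     sameType eps x y -> r x = r y) ->
  (forall x : modrep F fam, validRep eps x -> inRq #|F| (r x)) ->
  (forall m : nat, validn fam m ->
     conv m (Xel eps m mu) (Xel eps m nu)
     =1 linX eps m (fun x => (r x).[qint #|F| m])) ->
  forall lam : modrep F fam, validRep eps lam ->
    ((msize lam > msize mu + msize nu)%N -> r lam = 0) /\
    (msize lam = (msize mu + msize nu)%N ->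
       exists z : int, r lam = (z%:~R)%:P).
Proof.
move=> _ _ _ _ r_type _ structure_eq [n g] [/= vn hg].
have r_eval m : (n <= m)%N -> (r (MkRep g)).[qint #|F| m] =
    conv m (Xel eps m mu) (Xel eps m nu) (embed n m g).
  move=> le; have vm := validn_mono vn le.
  rewrite structure_eq // /linX inG_embed // hg; congr _.[_].
  apply: r_type; [by [] | by split; rewrite //= inG_embed | exact: sameType_embed].
have inj_f : injective (fun k => qint #|F| (n + k)).
  by move=> a b /(qint_inj (card_finNzRing_gt1 F)) /addnI.
split=> [gt_size | eq_size].
  apply: (eq_polyC_of_inj_horner inj_f) => k.
  by rewrite r_eval ?leq_addr // conv_embed_eq0 ?leq_addr.
have /natrP[c c_conv] := conv_Xel_nat eps mu nu g.
exists c; apply: (eq_polyC_of_inj_horner inj_f) => k.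
by rewrite r_eval ?leq_addr // conv_embed ?leq_addr ?c_conv // -eq_size.
Qed.
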